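(* For monomial ideals $J\subset I\subset S_f$, with $t$ a new variable, $\operatorname{sdepth}(I/J)[t]=\operatorname{sdepth}(I/J)[t,t^{-1}]=\operatorname{sdepth}(I/J)+1$. Consequently, for new variables $t_1,\ldots,t_r$, $\operatorname{sdepth}(I/J)[t_1^{\pm1},\ldots,t_r^{\pm1}]=\operatorname{sdepth}(I/J)+r$.
   Context: Let $K$ be a field, $S=K[x_1,\ldots,x_n]$, $A\subset\{1,\ldots,n\}$, $f=\prod_{j\in A}x_j$, and $S_f=K[x_1,\ldots,x_n,x_j^{-1}: j\in A]$. A monomial ideal of $S_f$ is an ideal generated by monomials $x_1^{a_1}\cdots x_n^{a_n}$ with $a_j\in\mathbb{Z}$ for $j\in A$ and $a_j\geq 0$ for $j\notin A$. For monomial ideals $J\subset I\subset S_f$, a Stanley space of $I/J$ is a free $K[Z]$-submodule $uK[Z]$ of $I/J$, where $u$ is a monomial in $I\setminus J$ and $Z\subset\{x_1,\ldots,x_n\}\cup\{x_j^{-1}: j\in A\}$ with $\{x_j,x_j^{-1}\}\not\subseteq Z$ for all $j\in A$; its dimension is $|Z|$. A Stanley decomposition of $I/J$ is a finite direct sum of Stanley spaces $I/J=\bigoplus_{i=1}^r u_iK[Z_i]$; its Stanley depth is $\min_i|Z_i|$, and $\operatorname{sdepth}(I/J)$ is the maximum of this over all Stanley decompositions. The same definitions are used for $(I/J)[t]$ and $(I/J)[t,t^{-1}]$, viewed as quotients of monomial ideals in the (localized) polynomial ring with the extra variable $t$ (resp. $t$ inverted), and likewise with several extra variables $t_1,\ldots,t_r$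 all inverted. *)

(* Combinatorial (multigraded) model of monomial ideals of
   S_f = K[x_v (v in V), x_j^{-1} (j in A)] and of Stanley decompositions. *)
From mathcomp Require Import all_boot all_order all_algebra.
Set Implicit Arguments. Unset Strict Implicit. Unset Printing Implicit Defensive.
Import Order.TTheory GRing.Theory Num.Theory.
Local Open Scope ring_scope.

Section StanleyDefs.
Variable V : finType.

(* Monomials are exponent vectors a : V -> int; a is a monomial of S_f
   iff a j >= 0 for every j not in A (the set of inverted variables). *)
Definition is_mono (A : {set V}) (a : V -> int) : Prop :=
  forall j, j \notin A -> 0 <= a j.

Definition mmul (a b : V -> int) : V -> int := fun j => a j + b j.

(* A monomial ideal of S_f, identified with its set of monomials
   (a set of monomials of S_f closed under multiplication by monomials of S_f).
   The empty set is the zero ideal. *)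
Definition is_monideal (A : {set V}) (I : (V -> int) -> Prop) : Prop :=
  (forall a, I a -> is_mono A a) /\
  (forall a b, I a -> is_mono A b -> I (mmul a b)).

(* A candidate Stanley space u K[Z]: Z is given by Zp (the variables x_j in Z)
   and Zn (the j such that x_j^{-1} is in Z). *)
Record sspace := SSpace { ss_u : V -> int; ss_Zp : {set V}; ss_Zn : {set V} }.

Definition ss_dim (s : sspace) : nat := (#|ss_Zp s| + #|ss_Zn s|)%N.

Definition inKZ (s : sspace) (e : V -> int) : Prop :=
  forall j, (j \in ss_Zp s -> 0 <= e j) /\ (j \in ss_Zn s -> e j <= 0) /\
            (j \notin ss_Zp s -> j \notin ss_Zn s -> e j = 0).

(* u K[Z] is a Stanley space of I/J: u in I \ J, Z admissible, and
   u K[Z] is a free K[Z]-submodule of I/J, i.e. u*m in I \ J for every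
   monomial m of K[Z]. *)
Definition is_sspace (A : {set V}) (I J : (V -> int) -> Prop) (s : sspace) :=
  [/\ I (ss_u s), ~ J (ss_u s), ss_Zn s \subset A, [disjoint ss_Zp s & ss_Zn s] &
      forall e, inKZ s e -> I (mmul (ss_u s) e) /\ ~ J (mmul (ss_u s) e)].

(* A Stanley decomposition I/J = (+)_i u_i K[Z_i]: a finite list of Stanley
   spaces whose monomial sets u_i Mon(Z_i) cover I \ J and are pairwise
   disjoint (as K-vector spaces spanned by monomials, this is exactly the
   direct-sum condition). *)
Definition is_sdec (A : {set V}) (I J : (V -> int) -> Prop) (D : seq sspace) :=
  [/\ forall i, (i < size D)%N -> is_sspace A I J (nth (SSpace (fun=> 0) set0 set0) D i),
      forall m, I m -> ~ J m -> exists i e, [/\ (i < size D)%N,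
          inKZ (nth (SSpace (fun=> 0) set0 set0) D i) e &
          m = mmul (ss_u (nth (SSpace (fun=> 0) set0 set0) D i)) e] &
      forall i k e e', (i < size D)%N -> (k < size D)%N ->
          inKZ (nth (SSpace (fun=> 0) set0 set0) D i) e ->
          inKZ (nth (SSpace (fun=> 0) set0 set0) D k) e' ->
          mmul (ss_u (nth (SSpace (fun=> 0) set0 set0) D i)) e =
          mmul (ss_u (nth (SSpace (fun=> 0) set0 set0) D k)) e' -> i = k].

Definition dec_sdepth (D : seq sspace) (d : nat) : Prop :=
  (exists i, (i < size D)%N /\ ss_dim (nth (SSpace (fun=> 0) set0 set0) D i) = d) /\
  (forall i, (i < size D)%N -> (d <= ss_dim (nth (SSpace (fun=> 0) set0 set0) D i))%N).

Definition sdepth_is (A : {set V}) (I J : (V -> int) -> Prop) (d : nat) : Prop :=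
  (exists D, is_sdec A I J D /\ dec_sdepth D d) /\
  (forall D d', is_sdec A I J D -> dec_sdepth D d' -> (d' <= d)%N).

End StanleyDefs.

(* Adjoining a new variable t (= None) to the variable set V. *)
(* (I/J)[t]: t not inverted; monomials of I S_f[t] are x^a t^k, a in I, k >= 0 *)
Definition A_poly (V : finType) (A : {set V}) : {set option V} := Some @: A.
Definition ext_poly (V : finType) (I : (V -> int) -> Prop) : (option V -> int) -> Prop :=
  fun m => I (fun j => m (Some j)) /\ 0 <= m None.
(* (I/J)[t, t^{-1}]: t inverted; monomials x^a t^k, a in I, k in Z *)
Definition A_laur (V : finType) (A : {set V}) : {set option V} := None |: Some @: A.
Definition ext_laur (V : finType) (I : (V -> int) -> Prop) : (option V -> int) -> Prop :=
  fun m => I (fun j => m (Some j)).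

(* Adjoining r new variables t_1..t_r (= inr i), all inverted. *)
Definition A_laurn (V : finType) (r : nat) (A : {set V}) : {set (V + 'I_r)%type} :=
  (inl @: A) :|: [set inr i | i : 'I_r].
Definition ext_laurn (V : finType) (r : nat) (I : (V -> int) -> Prop) :
  ((V + 'I_r)%type -> int) -> Prop :=
  fun m => I (fun j => m (inl j)).

Arguments A_laurn V r A : clear implicits.
Arguments ext_laurn V r I _ : clear implicits.

From mathcomp Require Import all_boot all_order all_algebra.
From mathcomp Require Import zify.
From Stdlib Require Import FunctionalExtensionality.
Set Implicit Arguments. Unset Strict Implicit. Unset Printing Implicit Defensive.
Import Order.TTheory GRing.Theory Num.Theory.
Local Open Scope ring_scope.

(* A Stanley space u K[Z] of I/J lifts to u K[Z, t] in (I/J)[t]; when t is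
   inverted it lifts to the two spaces u K[Z, t] and u t^-1 K[Z, t^-1], because
   K[t, t^-1] = K[t] (+) t^-1 K[t^-1].  Lifting a decomposition of I/J thus raises
   every dimension by one.  Conversely, in a Stanley decomposition of the
   extension, the spaces that meet the slice t^0 restrict (forgetting t) to a
   Stanley decomposition of I/J, and restriction lowers dimensions by at most one.
   Both constructions work for any finite set of new variables, inverted or not,
   at once. *)

Definition is_maxn (P : nat -> Prop) (d : nat) := P d /\ forall d', P d' -> (d' <= d)%N.

Lemma is_maxn_shift (P Q : nat -> Prop) (c : nat) :
  (forall d, P d -> Q (d + c)%N) ->
  (forall e, Q e -> exists2 d, P d & (e <= d + c)%N) ->
  forall e, is_maxn Q e <-> exists d, e = (d + c)%N /\ is_maxn P d.
Proof.
move=> PQ QP e; split.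
- move=> [Qe Qmax]; have [d Pd le_ed] := QP e Qe.
  have le_de := Qmax _ (PQ d Pd).
  exists d; split; first by apply/eqP; rewrite eqn_leq le_ed le_de.
  by split=> // d' Pd'; have := Qmax _ (PQ d' Pd'); lia.
- move=> [d [-> [Pd Pmax]]]; split; first exact: PQ.
  by move=> e' Qe'; have [d' Pd' le_e'] := QP e' Qe'; have := Pmax _ Pd'; lia.
Qed.

Section FunctionDecompositions.
Variables (V : finType) (A : {set V}) (I J : (V -> int) -> Prop).

Definition is_sdec_fun (n : nat) (F : nat -> sspace V) :=
  [/\ forall i, (i < n)%N -> is_sspace A I J (F i),
      forall m, I m -> ~ J m ->
        exists i e, [/\ (i < n)%N, inKZ (F i) e & m = mmul (ss_u (F i)) e] &
      forall i k e e', (i < n)%N -> (k < n)%N -> inKZ (F i) e -> inKZ (F k) e' ->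
        mmul (ss_u (F i)) e = mmul (ss_u (F k)) e' -> i = k].

Definition fun_sdepth (n : nat) (F : nat -> sspace V) (d : nat) :=
  (exists i, (i < n)%N /\ ss_dim (F i) = d) /\
  (forall i, (i < n)%N -> (d <= ss_dim (F i))%N).

Definition has_sdec_depth (d : nat) := exists n F, is_sdec_fun n F /\ fun_sdepth n F d.

Lemma is_sdec_fun_eq n (F G : nat -> sspace V) :
  (forall i, (i < n)%N -> F i = G i) -> is_sdec_fun n F -> is_sdec_fun n G.
Proof.
move=> FG [Fsp Fcov Fdis]; split.
- by move=> i lt_in; rewrite -FG //; apply: Fsp.
- move=> m Im Jm; have [i [e [lt_in inZe ->]]] := Fcov m Im Jm.
  by exists i, e; rewrite -FG.
- by move=> i k e e' lt_in lt_kn; rewrite -!FG //; apply: Fdis.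
Qed.

Lemma fun_sdepth_eq n (F G : nat -> sspace V) d :
  (forall i, (i < n)%N -> F i = G i) -> fun_sdepth n F d -> fun_sdepth n G d.
Proof.
move=> FG [[i [lt_in <-]] Fmin]; split; first by exists i; rewrite FG.
by move=> k lt_kn; rewrite -FG //; apply: Fmin.
Qed.

Lemma sdepth_isE d : sdepth_is A I J d <-> is_maxn has_sdec_depth d.
Proof.
have seq_funE d0 : (exists D, is_sdec A I J D /\ dec_sdepth D d0) <-> has_sdec_depth d0.
  split=> [[D decD]|[n [F [decF depthF]]]].
    by exists (size D), (nth (SSpace (fun=> 0) set0 set0) D).
  have FE i : (i < n)%N -> F i = nth (SSpace (fun=> 0) set0 set0) (mkseq F n) i.
    by move=> lt_in; rewrite nth_mkseq.
  exists (mkseq F n); have := is_sdec_fun_eq FE decF; have := fun_sdepth_eq FE depthF.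
  by rewrite /is_sdec /dec_sdepth size_mkseq.
split=> [[/seq_funE dec_d dmax]|[/seq_funE dec_d dmax]]; split=> //.
- by move=> d' /seq_funE [D [decD depthD]]; apply: dmax decD depthD.
- by move=> D d' decD depthD; apply: dmax; apply/seq_funE; exists D.
Qed.

Lemma fun_sdepth_exists n (F : nat -> sspace V) : (0 < n)%N -> exists d, fun_sdepth n F d.
Proof.
move=> n_gt0.
have : exists d, [exists i : 'I_n, ss_dim (F i) == d].
  by exists (ss_dim (F 0%N)); apply/existsP; exists (Ordinal n_gt0).
case/ex_minnP=> d /existsP [i /eqP dim_i] dmin.
exists d; split; first by exists i.
by move=> k lt_kn; apply: dmin; apply/existsP; exists (Ordinal lt_kn).
Qed.

End FunctionDecompositions.
Section NewVariables.
Variables (V W : finType) (inj : V -> W).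
Hypothesis inj_inj : injective inj.

Definition new_vars : {set W} := ~: (inj @: [set: V]).

Definition glue (f : V -> int) (g : W -> int) : W -> int :=
  fun w => if [pick v | inj v == w] is Some v then f v else g w.

Lemma old_notin_new v : (inj v \in new_vars) = false.
Proof. by rewrite in_setC imset_f ?inE. Qed.

Lemma new_or_old w : w \in new_vars \/ exists v, w = inj v.
Proof.
case: (boolP (w \in new_vars)) => [|]; first by left.
by rewrite in_setC negbK => /imsetP [v _ ->]; right; exists v.
Qed.

Lemma glue_old f g v : glue f g (inj v) = f v.
Proof.
rewrite /glue; case: pickP => [v' /eqP /inj_inj -> //|/(_ v)].
by rewrite eqxx.
Qed.

Lemma glue_new f g w : w \in new_vars -> glue f g w = g w.
Proof.
move=> w_new; rewrite /glue; case: pickP => [v /eqP vw|//].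
by rewrite -vw old_notin_new in w_new.
Qed.

Lemma glue_comp f g : (fun v => glue f g (inj v)) = f.
Proof. by apply: functional_extensionality => v; rewrite glue_old. Qed.

Lemma mem_old_imsetU (X : {set V}) (Y : {set W}) v :
  Y \subset new_vars -> (inj v \in inj @: X :|: Y) = (v \in X).
Proof.
move=> Y_new; rewrite in_setU mem_imset //.
case: (boolP (inj v \in Y)) => [/(subsetP Y_new)|]; last by rewrite orbF.
by rewrite old_notin_new.
Qed.

Lemma mem_new_imsetU (X : {set V}) (Y : {set W}) w :
  w \in new_vars -> (w \in inj @: X :|: Y) = (w \in Y).
Proof.
move=> w_new; rewrite in_setU; case: (boolP (w \in inj @: X)) => //=.
by case/imsetP=> v _ wv; rewrite wv old_notin_new in w_new.
Qed.

Lemma card_imsetU (X : {set V}) (Y : {set W}) :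
  Y \subset new_vars -> #|inj @: X :|: Y| = (#|X| + #|Y|)%N.
Proof.
move=> Y_new; rewrite -(card_imset X inj_inj) -cardsUI.
suff -> : inj @: X :&: Y = set0 by rewrite cards0 addn0.
apply/setP => w; rewrite !inE; apply/andP => -[/imsetP [v _ ->]].
by move/(subsetP Y_new); rewrite old_notin_new.
Qed.

(* The new variables in P contribute the factor t^-1 K[t^-1], the others K[t]. *)
Definition lift_space (s : sspace V) (P : {set W}) : sspace W :=
  SSpace (glue (ss_u s) (fun w => if w \in P then -1 else 0))
         (inj @: ss_Zp s :|: (new_vars :\: P)) (inj @: ss_Zn s :|: P).

Lemma inKZ_lift (s : sspace V) (P : {set W}) e :
  P \subset new_vars ->
  inKZ (lift_space s P) e <->
  inKZ s (fun v => e (inj v)) /\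
  (forall w, w \in new_vars -> (w \in P -> e w <= 0) /\ (w \notin P -> 0 <= e w)).
Proof.
move=> P_new; have nP_new : new_vars :\: P \subset new_vars by apply: subsetDl.
split.
- move=> inZe; split=> [v|w w_new].
  + by have := inZe (inj v); rewrite /= !mem_old_imsetU.
  + have := inZe w; rewrite /= !mem_new_imsetU // in_setD w_new andbT.
    by case: (w \in P) => [[_ [h _]]|[h _]]; split=> //; apply: h.
- move=> [inZe e_new] w; case: (new_or_old w) => [w_new|[v ->]].
  + rewrite /= !mem_new_imsetU // in_setD w_new andbT.
    have [e_le0 e_ge0] := e_new w w_new.
    by case: (w \in P) e_le0 e_ge0 => /= e_le0 e_ge0; do !split=> // _;
      first [exact: e_le0|exact: e_ge0].
  + by rewrite /= !mem_old_imsetU //; apply: inZe.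
Qed.

Lemma dim_lift_space (s : sspace V) (P : {set W}) :
  P \subset new_vars -> ss_dim (lift_space s P) = (ss_dim s + #|new_vars|)%N.
Proof.
move=> P_new; rewrite /ss_dim /= !card_imsetU ?subsetDl //.
by have := cardsID P new_vars; rewrite (setIidPr P_new) => <-; lia.
Qed.

Lemma lift_space_covers (s : sspace V) e (x : W -> int) :
  inKZ s e -> (fun v => x (inj v)) = mmul (ss_u s) e ->
  exists e', inKZ (lift_space s [set w in new_vars | x w < 0]) e' /\
             x = mmul (ss_u (lift_space s [set w in new_vars | x w < 0])) e'.
Proof.
set P := [set w in new_vars | _] => inZe x_old.
have P_new : P \subset new_vars by apply/subsetP => w; rewrite inE => /andP [].
exists (glue e (fun w => x w - (if w \in P then -1 else 0))); split.
- apply/inKZ_lift => //; split; first by rewrite glue_comp.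
  move=> w w_new; rewrite glue_new // inE w_new /=.
  case: ltrP => [x_lt0|x_ge0] /=; split=> // _; first lia.
  by rewrite subr0.
- apply: functional_extensionality => w; case: (new_or_old w) => [w_new|[v ->]].
  + by rewrite /mmul /= !glue_new // addrC subrK.
  + by rewrite /mmul /= !glue_old; have := congr1 (fun f => f v) x_old.
Qed.

Lemma lift_space_disjoint (s s' : sspace V) (P P' : {set W}) e e' :
  P \subset new_vars -> P' \subset new_vars ->
  inKZ (lift_space s P) e -> inKZ (lift_space s' P') e' ->
  mmul (ss_u (lift_space s P)) e = mmul (ss_u (lift_space s' P')) e' ->
  mmul (ss_u s) (fun v => e (inj v)) = mmul (ss_u s') (fun v => e' (inj v)) /\ P = P'.
Proof.
move=> P_new P'_new /(inKZ_lift _ _ P_new) [_ e_new].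
move=> /(inKZ_lift _ _ P'_new) [_ e'_new] ee'; split.
  apply: functional_extensionality => v; have := congr1 (fun f => f (inj v)) ee'.
  by rewrite /mmul /= !glue_old.
apply/setP => w; case: (new_or_old w) => [w_new|[v ->]]; last first.
  have old_notin (Q : {set W}) : Q \subset new_vars -> inj v \in Q = false.
    by move=> Q_new; apply/negP => /(subsetP Q_new); rewrite old_notin_new.
  by rewrite !old_notin.
have := congr1 (fun f => f w) ee'; rewrite /mmul /= !glue_new //.
have [le1 ge1] := e_new w w_new; have [le2 ge2] := e'_new w w_new.
case: (w \in P) le1 ge1; case: (w \in P') le2 ge2 => //= le2 ge2 le1 ge1 eq_w.
- by have := le1 isT; have := ge2 isT; lia.
- by have := le2 isT; have := ge1 isT; lia.
Qed.

Definition restrict_space (s : sspace W) : sspace V :=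
  SSpace (fun v => ss_u s (inj v)) (inj @^-1: ss_Zp s) (inj @^-1: ss_Zn s).

Lemma inKZ_restrict (s : sspace W) e :
  inKZ s e -> inKZ (restrict_space s) (fun v => e (inj v)).
Proof. by move=> inZe v; rewrite /= !inE; apply: inZe. Qed.

Lemma inKZ_glue0 (s : sspace W) e :
  inKZ (restrict_space s) e -> inKZ s (glue e (fun=> 0)).
Proof.
move=> inZe w; case: (new_or_old w) => [w_new|[v ->]]; first by rewrite glue_new.
by rewrite glue_old; have := inZe v; rewrite /= !inE.
Qed.

(* u K[Z] contains a monomial all of whose new exponents vanish. *)
Definition meets_base (s : sspace W) : bool :=
  [forall w in new_vars, (ss_u s w == 0) || ((0 < ss_u s w) && (w \in ss_Zn s))
                         || ((ss_u s w < 0) && (w \in ss_Zp s))].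

Lemma meets_base_of_glue0 (s : sspace W) e x :
  [disjoint ss_Zp s & ss_Zn s] -> inKZ s e ->
  mmul (ss_u s) e = glue x (fun=> 0) -> meets_base s.
Proof.
move=> dis_s inZe ux; apply/forall_inP => w w_new.
have uew := congr1 (fun f => f w) ux; rewrite /mmul glue_new // in uew.
have := inZe w; case: (boolP (w \in ss_Zp s)) => [wp|wnp].
  by rewrite (disjointFr dis_s wp) /= andbT andbF orbF => -[/(_ isT)]; lia.
case: (boolP (w \in ss_Zn s)) => [wn|wnn] /=; rewrite ?andbT ?andbF ?orbF.
- by move=> [_ [/(_ isT)]]; lia.
- by move=> [_ [_ /(_ isT isT)]]; lia.
Qed.

Lemma inKZ_glue_opp (s : sspace W) e :
  meets_base s -> [disjoint ss_Zp s & ss_Zn s] ->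
  inKZ (restrict_space s) e -> inKZ s (glue e (fun w => - ss_u s w)).
Proof.
move=> /forall_inP base_s dis_s inZe w; case: (new_or_old w) => [w_new|[v ->]].
  rewrite glue_new //; have := base_s w w_new.
  case: (boolP (w \in ss_Zp s)) => [wp|wnp].
    by rewrite (disjointFr dis_s wp) /= andbT andbF orbF => u_le0; do !split=> //; lia.
  by case: (boolP (w \in ss_Zn s)) => wn; rewrite /= ?andbT ?andbF ?orbF => u_w;
    do !split=> //; lia.
by rewrite glue_old; have := inZe v; rewrite /= !inE.
Qed.

Lemma dim_restrict_space (s : sspace W) :
  [disjoint ss_Zp s & ss_Zn s] ->
  (ss_dim s <= ss_dim (restrict_space s) + #|new_vars|)%N.
Proof.
move=> dis_s; set R := inj @: [set: V].
have cardE (X : {set W}) : #|X| = (#|inj @^-1: X| + #|X :\: R|)%N.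
  rewrite -(cardsID R X); congr (_ + _)%N.
  suff <- : inj @: (inj @^-1: X) = X :&: R by rewrite card_imset.
  apply/setP => w; rewrite in_setI; apply/imsetP/andP => [[v vX ->]|[wX /imsetP [v _ wv]]].
    by rewrite inE in vX; split=> //; apply: imset_f.
  by exists v; rewrite // inE -wv.
have : (#|ss_Zp s :\: R| + #|ss_Zn s :\: R| <= #|new_vars|)%N.
  rewrite -cardsUI.
  have -> : (ss_Zp s :\: R) :&: (ss_Zn s :\: R) = set0.
    apply/setP => w; rewrite !inE.
    by case: (boolP (w \in ss_Zp s)) => [wp|]; rewrite ?andbF //= (disjointFr dis_s wp) !andbF.
  rewrite cards0 addn0; apply: subset_leq_card; apply/subsetP => w.
  by rewrite !inE => /orP [] /andP [].
rewrite /ss_dim /= (cardE (ss_Zp s)) (cardE (ss_Zn s)); lia.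
Qed.

End NewVariables.

(* I' and J' are I and J with the new variables adjoined; those in Npos stay
   non-inverted, the others are inverted. *)
Record var_extension (V W : finType) (inj : V -> W) (A : {set V}) (A' Npos : {set W})
    (I J : (V -> int) -> Prop) (I' J' : (W -> int) -> Prop) : Prop := VarExtension {
  ext_inverted_old : forall v, (inj v \in A') = (v \in A);
  ext_inverted_new : forall w, w \in new_vars inj -> (w \in A') = (w \notin Npos);
  ext_pos_new : Npos \subset new_vars inj;
  ext_I : forall m, I' m <-> I (fun v => m (inj v)) /\ (forall w, w \in Npos -> 0 <= m w);
  ext_J : forall m, J' m <-> J (fun v => m (inj v)) /\ (forall w, w \in Npos -> 0 <= m w) }.

Section Extension.
Variables (V W : finType) (inj : V -> W) (A : {set V}) (A' Npos : {set W}).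
Variables (I J : (V -> int) -> Prop) (I' J' : (W -> int) -> Prop).
Hypothesis inj_inj : injective inj.
Hypothesis ext : var_extension inj A A' Npos I J I' J'.

Lemma lift_sspace (s : sspace V) (P : {set W}) :
  is_sspace A I J s -> P \subset new_vars inj :\: Npos ->
  is_sspace A' I' J' (lift_space inj s P).
Proof.
have [inv_old inv_new pos_new extI extJ] := ext.
move=> [Iu Ju Zn_A dis_s inZs] P_sub.
have P_new : P \subset new_vars inj by apply: subset_trans P_sub (subsetDl _ _).
have notP w : w \in Npos -> w \notin P.
  by move=> w_pos; apply/negP => /(subsetP P_sub); rewrite in_setD w_pos.
have posN w : w \in Npos -> w \in new_vars inj by move/(subsetP pos_new).
have mmul_old e : (fun v => mmul (ss_u (lift_space inj s P)) e (inj v)) =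
                  mmul (ss_u s) (fun v => e (inj v)).
  by apply: functional_extensionality => v; rewrite /mmul /= (glue_old inj_inj).
split.
- apply/extI; rewrite /= (glue_comp inj_inj) //; split=> // w w_pos.
  by rewrite glue_new ?posN // (negbTE (notP w w_pos)).
- by move=> /extJ [] /=; rewrite (glue_comp inj_inj).
- apply/subsetP => w; rewrite /= in_setU => /orP [/imsetP [v v_Zn ->]|wP].
  + by rewrite inv_old; apply: (subsetP Zn_A).
  + by move: (subsetP P_sub w wP); rewrite in_setD => /andP [w_npos w_new]; rewrite inv_new.
- rewrite -setI_eq0; apply/eqP/setP => w; rewrite in_setI in_set0 /=.
  case: (new_or_old inj w) => [w_new|[v ->]].
  + by rewrite !mem_new_imsetU // in_setD; case: (w \in P); rewrite ?andbF.
  + rewrite !mem_old_imsetU ?subsetDl //; case: (boolP (v \in ss_Zp s)) => //= v_Zp.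
    by rewrite (disjointFr dis_s v_Zp).
- move=> e /(inKZ_lift inj_inj _ _ P_new) [inZe e_new]; have [Iue Jue] := inZs _ inZe.
  split; last by move=> /extJ []; rewrite mmul_old.
  apply/extI; rewrite mmul_old; split=> // w w_pos.
  rewrite /mmul /= glue_new ?posN // (negbTE (notP w w_pos)) add0r.
  by apply: (e_new w (posN w w_pos)).2; apply: notP.
Qed.

Lemma restrict_sspace (s : sspace W) :
  is_sspace A' I' J' s -> is_sspace A I J (restrict_space inj s).
Proof.
have [inv_old _ _ extI extJ] := ext.
move=> [Iu Ju Zn_A dis_s inZs]; split.
- by have [] := (extI _).1 Iu.
- by move=> Ju_old; apply: Ju; apply/extJ; split=> //; have [] := (extI _).1 Iu.
- by apply/subsetP => v; rewrite /= inE => /(subsetP Zn_A); rewrite inv_old.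
- rewrite -setI_eq0; apply/eqP/setP => v; rewrite /= !inE.
  by case: (boolP (inj v \in ss_Zp s)) => //= v_Zp; rewrite (disjointFr dis_s v_Zp).
- move=> e inZe; have [Iue Jue] := inZs _ (inKZ_glue0 inj_inj inZe).
  have mmul_old : (fun v => mmul (ss_u s) (glue inj e (fun=> 0)) (inj v)) =
                  mmul (ss_u (restrict_space inj s)) e.
    by apply: functional_extensionality => v; rewrite /mmul /= (glue_old inj_inj).
  split; first by have [] := (extI _).1 Iue; rewrite mmul_old.
  move=> Jue_old; apply: Jue; apply/extJ; split; first by rewrite mmul_old.
  by have [] := (extI _).1 Iue.
Qed.


Definition sign_patterns : seq {set W} := enum (powerset (new_vars inj :\: Npos)).

Local Notation npat := (size sign_patterns).

Lemma npat_gt0 : (0 < npat)%N.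
Proof. by rewrite -has_predT; apply/hasP; exists set0; rewrite // mem_enum powersetE sub0set. Qed.

Lemma sign_pattern_sub k : nth set0 sign_patterns (k %% npat)%N \subset new_vars inj :\: Npos.
Proof. by have := mem_nth set0 (ltn_pmod k npat_gt0); rewrite mem_enum powersetE. Qed.

Lemma sign_pattern_new k : nth set0 sign_patterns (k %% npat)%N \subset new_vars inj.
Proof. exact: subset_trans (sign_pattern_sub k) (subsetDl _ _). Qed.

Definition lift_dec (F : nat -> sspace V) (k : nat) : sspace W :=
  lift_space inj (F (k %/ npat)%N) (nth set0 sign_patterns (k %% npat)%N).

Lemma lift_dec_sdec n F : is_sdec_fun A I J n F -> is_sdec_fun A' I' J' (n * npat) (lift_dec F).
Proof.
have [_ _ _ extI extJ] := ext; have npat_gt0 := npat_gt0.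
have div_lt k : (k < n * npat)%N -> (k %/ npat < n)%N by rewrite ltn_divLR.
move=> [Fsp Fcov Fdis]; split.
- by move=> k lt_k; apply: lift_sspace; [apply: Fsp; apply: div_lt|apply: sign_pattern_sub].
- move=> x Ix Jx; have [Ix_old x_pos] := (extI x).1 Ix.
  have Jx_old : ~ J (fun v => x (inj v)) by move=> J_old; apply: Jx; apply/extJ.
  have [i [e [lt_in inZe x_old]]] := Fcov _ Ix_old Jx_old.
  have [e' [inZe' xe']] := lift_space_covers inj_inj inZe x_old.
  set P := [set w in new_vars inj | x w < 0] in inZe' xe'.
  have P_pat : P \in sign_patterns.
    rewrite mem_enum powersetE; apply/subsetP => w; rewrite !inE => /andP [w_new x_lt0].
    by rewrite w_new andbT; apply/negP => /x_pos; rewrite leNgt x_lt0.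
  have lt_j : (index P sign_patterns < npat)%N by rewrite index_mem.
  set k := (i * npat + index P sign_patterns)%N.
  have k_div : (k %/ npat)%N = i by rewrite divnMDl // divn_small // addn0.
  have k_mod : (k %% npat)%N = index P sign_patterns by rewrite modnMDl modn_small.
  exists k, e'; rewrite /lift_dec k_div k_mod nth_index //; split=> //.
  by rewrite -ltn_divLR // k_div.
- move=> k1 k2 e1 e2 lt_k1 lt_k2 inZe1 inZe2 eq12.
  have [eq_old eq_pat] := lift_space_disjoint inj_inj (sign_pattern_new k1)
                                              (sign_pattern_new k2) inZe1 inZe2 eq12.
  have inZ_old k e : inKZ (lift_dec F k) e -> inKZ (F (k %/ npat)%N) (fun v => e (inj v)).
    by move/(inKZ_lift inj_inj _ _ (sign_pattern_new k)) => [].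
  have div_eq : (k1 %/ npat)%N = (k2 %/ npat)%N.
    by apply: Fdis eq_old; [apply: div_lt|apply: div_lt|apply: inZ_old|apply: inZ_old].
  have mod_eq : (k1 %% npat)%N = (k2 %% npat)%N.
    apply/eqP; rewrite -(nth_uniq set0 (ltn_pmod _ npat_gt0) (ltn_pmod _ npat_gt0)).
      by rewrite eq_pat.
    exact: enum_uniq.
  by rewrite (divn_eq k1 npat) (divn_eq k2 npat) div_eq mod_eq.
Qed.

Lemma lift_dec_depth n F d :
  fun_sdepth n F d -> fun_sdepth (n * npat) (lift_dec F) (d + #|new_vars inj|).
Proof.
have npat_gt0 := npat_gt0; move=> [[i [lt_in dim_i]] Fmin]; split.
- exists (i * npat)%N; rewrite ltn_pmul2r //; split=> //.
  by rewrite /lift_dec dim_lift_space ?sign_pattern_new // mulnK // dim_i.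
- move=> k lt_k; rewrite /lift_dec dim_lift_space ?sign_pattern_new // leq_add2r.
  by apply: Fmin; rewrite ltn_divLR.
Qed.

Lemma has_sdec_depth_lift d :
  has_sdec_depth A I J d -> has_sdec_depth A' I' J' (d + #|new_vars inj|).
Proof.
move=> [n [F [decF depthF]]]; exists (n * npat)%N, (lift_dec F).
by split; [apply: lift_dec_sdec|apply: lift_dec_depth].
Qed.

Definition based_spaces n (F : nat -> sspace W) : seq nat :=
  [seq i <- iota 0 n | meets_base inj (F i)].

Definition restrict_dec n (F : nat -> sspace W) (j : nat) : sspace V :=
  restrict_space inj (F (nth 0%N (based_spaces n F) j)).

Lemma nth_based_spaces n F j : (j < size (based_spaces n F))%N ->
  (nth 0%N (based_spaces n F) j < n)%N /\ meets_base inj (F (nth 0%N (based_spaces n F) j)).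
Proof.
move=> lt_j; have := mem_nth 0%N lt_j.
by rewrite mem_filter mem_iota add0n => /andP [-> /andP [_ ->]].
Qed.

Lemma restrict_dec_covers n F : is_sdec_fun A' I' J' n F ->
  forall x, I x -> ~ J x -> exists j e, [/\ (j < size (based_spaces n F))%N,
    inKZ (restrict_dec n F j) e & x = mmul (ss_u (restrict_dec n F j)) e].
Proof.
have [_ _ pos_new extI extJ] := ext; move=> [Fsp Fcov _] x Ix Jx.
set x0 := glue inj x (fun=> 0).
have Ix0 : I' x0.
  apply/extI; rewrite /x0 (glue_comp inj_inj); split=> // w /(subsetP pos_new) w_new.
  by rewrite glue_new.
have Jx0 : ~ J' x0 by move=> /extJ []; rewrite /x0 (glue_comp inj_inj).
have [i [e [lt_in inZe x0e]]] := Fcov _ Ix0 Jx0.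
have [_ _ _ dis_i _] := Fsp i lt_in.
have i_based : i \in based_spaces n F.
  by rewrite mem_filter mem_iota add0n lt_in (meets_base_of_glue0 dis_i inZe (esym x0e)).
exists (index i (based_spaces n F)), (fun v => e (inj v)).
rewrite /restrict_dec nth_index //; split; first by rewrite index_mem.
- exact: inKZ_restrict.
- apply: functional_extensionality => v; have := congr1 (fun f => f (inj v)) x0e.
  by rewrite /mmul /x0 /= (glue_old inj_inj).
Qed.

Lemma restrict_dec_sdec n F :
  is_sdec_fun A' I' J' n F -> is_sdec_fun A I J (size (based_spaces n F)) (restrict_dec n F).
Proof.
move=> decF; have [Fsp _ Fdis] := decF; split.
- by move=> j lt_j; apply: restrict_sspace; apply: Fsp; have [] := nth_based_spaces lt_j.
- exact: restrict_dec_covers.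
- move=> j1 j2 e1 e2 lt_j1 lt_j2 inZe1 inZe2 eq12.
  have [lt1 base1] := nth_based_spaces lt_j1; have [lt2 base2] := nth_based_spaces lt_j2.
  have [_ _ _ dis1 _] := Fsp _ lt1; have [_ _ _ dis2 _] := Fsp _ lt2.
  have : nth 0%N (based_spaces n F) j1 = nth 0%N (based_spaces n F) j2.
    apply: Fdis lt1 lt2 (inKZ_glue_opp inj_inj base1 dis1 inZe1)
                        (inKZ_glue_opp inj_inj base2 dis2 inZe2) _.
    apply: functional_extensionality => w; case: (new_or_old inj w) => [w_new|[v ->]].
    + by rewrite /mmul !glue_new // !addrN.
    + by rewrite /mmul !(glue_old inj_inj); have := congr1 (fun f => f v) eq12.
  by move/eqP; rewrite nth_uniq ?filter_uniq ?iota_uniq // => /eqP.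
Qed.

Lemma has_sdec_depth_restrict d : has_sdec_depth A' I' J' d ->
  exists2 d', has_sdec_depth A I J d' & (d <= d' + #|new_vars inj|)%N.
Proof.
move=> [n [F [decF [[i [lt_in <-]] Fmin]]]]; have [Fsp _ _] := decF.
have [Iu Ju _ _ _] := restrict_sspace (Fsp i lt_in).
have [j [_ [lt_j _ _]]] := restrict_dec_covers decF Iu Ju.
have [d' depth_d'] := fun_sdepth_exists (restrict_dec n F) (leq_ltn_trans (leq0n _) lt_j).
exists d'; first by exists (size (based_spaces n F)), (restrict_dec n F); split=> //;
  apply: restrict_dec_sdec.
have [[j' [lt_j' <-]] _] := depth_d'.
have [lt_n _] := nth_based_spaces lt_j'; have [_ _ _ dis _] := Fsp _ lt_n.
exact: leq_trans (Fmin _ lt_n) (dim_restrict_space inj_inj dis).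
Qed.

Lemma sdepth_is_extension d :
  sdepth_is A' I' J' d <-> exists d', d = (d' + #|new_vars inj|)%N /\ sdepth_is A I J d'.
Proof.
rewrite sdepth_isE.
apply: iff_trans (is_maxn_shift has_sdec_depth_lift has_sdec_depth_restrict d) _.
by split=> -[d' [-> max_d']]; exists d'; split=> //; apply/sdepth_isE.
Qed.

End Extension.

Lemma new_vars_Some (V : finType) : new_vars (@Some V) = [set None].
Proof.
apply/setP => -[v|]; first by rewrite old_notin_new in_set1.
by rewrite in_set1 eqxx in_setC; apply/negP => /imsetP [].
Qed.

Lemma new_vars_inl (V : finType) (r : nat) : new_vars (@inl V 'I_r) = [set inr i | i : 'I_r].
Proof.
apply/setP => -[v|i]; first by rewrite old_notin_new; apply/esym/imsetP => -[].
by rewrite in_setC imset_f // ?inE //; apply/imsetP => -[].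
Qed.

Lemma var_extension_poly (V : finType) (A : {set V}) I J :
  var_extension (@Some V) A (A_poly A) [set None] I J (ext_poly I) (ext_poly J).
Proof.
have extE K m : ext_poly K m <->
    K (fun v => m (Some v)) /\ (forall w, w \in [set None] -> 0 <= m w).
  split=> -[Km m_pos]; split=> //; first by move=> w; rewrite inE => /eqP ->.
  by apply: m_pos; rewrite inE.
split=> //; first by move=> v; rewrite mem_imset //; apply: Some_inj.
- by move=> w; rewrite new_vars_Some in_set1 => /eqP ->; apply/imsetP => -[].
- by rewrite new_vars_Some.
Qed.

Lemma var_extension_laur (V : finType) (A : {set V}) I J :
  var_extension (@Some V) A (A_laur A) set0 I J (ext_laur I) (ext_laur J).
Proof.
have extE K m : ext_laur K m <-> K (fun v => m (Some v)) /\ (forall w, w \in set0 -> 0 <= m w).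
  by split=> [Km|[]//]; split=> // w; rewrite inE.
split=> //; first by move=> v; rewrite /A_laur in_setU1 /= mem_imset //; apply: Some_inj.
- by move=> w; rewrite new_vars_Some in_set1 => /eqP ->; rewrite in_setU1 eqxx in_set0.
- exact: sub0set.
Qed.

Lemma var_extension_laurn (V : finType) (r : nat) (A : {set V}) I J :
  var_extension (@inl V 'I_r) A (A_laurn V r A) set0 I J (ext_laurn V r I) (ext_laurn V r J).
Proof.
have extE K m : ext_laurn V r K m <->
    K (fun v => m (inl v)) /\ (forall w, w \in set0 -> 0 <= m w).
  by split=> [Km|[]//]; split=> // w; rewrite inE.
split=> //.
- move=> v; rewrite /A_laurn in_setU mem_imset; last exact: inl_inj.
  by case: (v \in A) => //=; apply/imsetP => -[].
- by move=> w; rewrite new_vars_inl /A_laurn in_setU in_set0 => ->; rewrite orbT.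
- exact: sub0set.
Qed.

Theorem theorem4p1 (V : finType) (A : {set V}) (I J : (V -> int) -> Prop) (r : nat) :
  is_monideal A I -> is_monideal A J -> (forall a, J a -> I a) ->
  forall d : nat,
    (sdepth_is (A_poly A) (ext_poly I) (ext_poly J) d <->
       (exists d', d = d'.+1 /\ sdepth_is A I J d')) /\
    (sdepth_is (A_laur A) (ext_laur I) (ext_laur J) d <->
       (exists d', d = d'.+1 /\ sdepth_is A I J d')) /\
    (sdepth_is (A_laurn V r A) (ext_laurn V r I) (ext_laurn V r J) d <->
       (exists d', d = (d' + r)%N /\ sdepth_is A I J d')).
Proof.
move=> _ _ _ d.
have card_Some : #|new_vars (@Some V)| = 1%N by rewrite new_vars_Some cards1.
have card_inl : #|new_vars (@inl V 'I_r)| = r.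
  by rewrite new_vars_inl card_imset ?card_ord //; apply: inr_inj.
rewrite (sdepth_is_extension Some_inj (var_extension_poly A I J)).
rewrite (sdepth_is_extension Some_inj (var_extension_laur A I J)).
rewrite (sdepth_is_extension inl_inj (var_extension_laurn r A I J)) card_Some card_inl.
split; last split; last by [].
all: by split=> -[d' [-> sd]]; exists d'; rewrite addn1.
Qed.
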